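(* Let $\mu_0$ be a probability measure on $\mathbb R^3$ with $\int|v|^4\mu_0(dv)<\infty$ and $|\hat\mu_0(\xi)|=o(|\xi|^{-p})$ as $|\xi|\to\infty$ for some $p>0$. Assume moreover $\int v\,\mu_0(dv)=0$, $\int|v|^2\mu_0(dv)=3$, $\int v_i^2\mu_0(dv)=\sigma_i^2$ ($i=1,2,3$), $\int v_iv_j\mu_0(dv)=0$ for $i\ne j$ (so $\sigma_1^2+\sigma_2^2+\sigma_3^2=3$). Then there exists a constant $\lambda>0$ such that $$|\hat\mu_0(\xi)|\le\Big(\frac{\lambda^2}{\lambda^2+|\xi|^2}\Big)^q\qquad\text{for every }\xi\in\mathbb R^3,$$ where $q=1/(2\lceil 2/p\rceil)$.
   Context: $\hat\mu_0(\xi)=\int e^{i\xi\cdot v}\mu_0(dv)$; $\lceil x\rceil$ is the least integer not less than $x$. *)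

From HB Require Import structures.
From mathcomp Require Import all_boot all_order all_algebra.
From mathcomp Require Import all_classical all_reals all_analysis.
Set Implicit Arguments. Unset Strict Implicit. Unset Printing Implicit Defensive.
Import Order.TTheory GRing.Theory Num.Theory.
Import numFieldNormedType.Exports.
Local Open Scope ring_scope.

(* Points of R^3 are represented as ((v1, v2), v3) : R * R * R, equipped with
   the product (Borel) sigma-algebra. *)
Definition vx {R : realType} (v : R * R * R) : R := v.1.1.
Definition vy {R : realType} (v : R * R * R) : R := v.1.2.
Definition vz {R : realType} (v : R * R * R) : R := v.2.

Definition comp3 {R : realType} (i : 'I_3) (v : R * R * R) : R :=
  if val i == 0%N then vx v else if val i == 1%N then vy v else vz v.

Definition dot3 {R : realType} (x v : R * R * R) : R :=
  vx x * vx v + vy x * vy v + vz x * vz v.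

Definition sqnorm3 {R : realType} (v : R * R * R) : R := dot3 v v.
Definition norm3 {R : realType} (v : R * R * R) : R := Num.sqrt (sqnorm3 v).

Definition fourier_re {R : realType} (mu : probability (R * R * R)%type R)
  (xi : R * R * R) : R := Rintegral mu setT (fun v => cos (dot3 xi v)).
Definition fourier_im {R : realType} (mu : probability (R * R * R)%type R)
  (xi : R * R * R) : R := Rintegral mu setT (fun v => sin (dot3 xi v)).
Definition fourier_abs {R : realType} (mu : probability (R * R * R)%type R)
  (xi : R * R * R) : R :=
  Num.sqrt (fourier_re mu xi ^+ 2 + fourier_im mu xi ^+ 2).

From HB Require Import structures.
From mathcomp Require Import all_boot all_order all_algebra.
From mathcomp Require Import all_classical all_reals all_analysis.
From mathcomp Require Import measurable_realfun ring lra.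
Import Order.TTheory GRing.Theory Num.Theory.
Import numFieldNormedType.Exports.
Local Open Scope ring_scope.

(* Every characteristic function
   satisfies 1 - |phi(2 xi)| <= 4 (1 - |phi(xi)|), obtained by integrating
   1 - cos 2u <= 4 (1 - cos u) after rotating phi(xi) to the positive axis.
   If |phi| <= 1/2 outside the ball of radius M, iterating this inequality
   downwards from the sphere of radius M gives 1 - |phi(xi)| >= |xi|^2/(8M^2)
   inside the ball, i.e. |phi(xi)| <= 9M^2/(9M^2 + |xi|^2).  Far away the
   decay |phi(xi)| <= |xi|^-p <= |xi|^-2q does the job, since for
   |xi| >= 3M >= 3 the kernel with lambda = 3M dominates 1/|xi|^2. *)

Section UnitDirection.
Context {R : rcfType}.

Lemma unit_dot_le_sqrt (x y a b : R) :
  x ^+ 2 + y ^+ 2 = 1 -> x * a + y * b <= Num.sqrt (a ^+ 2 + b ^+ 2).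
Proof.
move=> xy1.
have sq_le : (x * a + y * b) ^+ 2 <= a ^+ 2 + b ^+ 2.
  have := sqr_ge0 (x * b - y * a); nra.
apply: (le_trans (ler_norm _)); rewrite -sqrtr_sqr; exact: ler_wsqrtr.
Qed.

Lemma unit_direction (a b : R) (r := Num.sqrt (a ^+ 2 + b ^+ 2)) : 0 < r ->
  (a / r) ^+ 2 + (b / r) ^+ 2 = 1 /\ a / r * a + b / r * b = r.
Proof.
move=> r_gt0.
have r2 : r ^+ 2 = a ^+ 2 + b ^+ 2 by rewrite sqr_sqrtr // addr_ge0 // sqr_ge0.
have r_neq0 : r != 0 by rewrite gt_eqF.
split; first by rewrite !expr_div_n -mulrDl -r2 divff // expf_neq0.
rewrite (_ : _ / _ * _ + _ / _ * _ = (a ^+ 2 + b ^+ 2) / r); last by ring.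
by rewrite -r2 expr2 mulfK.
Qed.

End UnitDirection.

Section Dilation.
Context {R : realType}.

Definition dbl3 (xi : R * R * R) : R * R * R :=
  ((vx xi *+ 2, vy xi *+ 2), vz xi *+ 2).

Lemma dot3_dbl3 xi v : dot3 (dbl3 xi) v = dot3 xi v *+ 2.
Proof. by rewrite /dot3 /dbl3 /vx /vy /vz /= !mulr2n; ring. Qed.

Lemma sqnorm3_dbl3 xi : sqnorm3 (dbl3 xi) = 4 * sqnorm3 xi.
Proof. by rewrite /sqnorm3 /dot3 /dbl3 /vx /vy /vz /= !mulr2n; ring. Qed.

Lemma sqnorm3_ge0 (xi : R * R * R) : 0 <= sqnorm3 xi.
Proof. by rewrite /sqnorm3 /dot3 -!expr2 !addr_ge0 // sqr_ge0. Qed.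

Lemma norm3_ge0 (xi : R * R * R) : 0 <= norm3 xi.
Proof. exact: sqrtr_ge0. Qed.

Lemma sqr_norm3 (xi : R * R * R) : norm3 xi ^+ 2 = sqnorm3 xi.
Proof. by rewrite /norm3 sqr_sqrtr // sqnorm3_ge0. Qed.

Lemma norm3_dbl3 xi : norm3 (dbl3 xi) = 2 * norm3 xi.
Proof.
rewrite /norm3 sqnorm3_dbl3 sqrtrM // (_ : 4 = 2 ^+ 2); last by rewrite expr2; lra.
by rewrite sqrtr_sqr ger0_norm.
Qed.

End Dilation.

Section CharacteristicFunction.
Context {R : realType} (mu : probability (R * R * R)%type R).

Lemma measurable_dot3 (xi : R * R * R) : measurable_fun setT (dot3 xi).
Proof.
have m11 : measurable_fun setT (fun v : R * R * R => v.1.1).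
  exact: measurableT_comp measurable_fst measurable_fst.
have m12 : measurable_fun setT (fun v : R * R * R => v.1.2).
  exact: measurableT_comp measurable_snd measurable_fst.
rewrite /dot3 /vx /vy /vz.
by apply: measurable_funD; first apply: measurable_funD;
  apply: measurable_funM => //; exact: measurable_cst.
Qed.

Lemma integrable_bounded (f : R * R * R -> R) (K : R) :
  measurable_fun setT f -> (forall v, `|f v| <= K) -> mu.-integrable setT (EFin \o f).
Proof.
move=> mf fK; apply: measurable_bounded_integrable => //.
  by rewrite [X in (X < _)%E]probability_setT ltry.
by exists K; split; [exact: num_real | move=> k Kk v _; apply: le_trans (fK v) (ltW Kk)].
Qed.

Lemma integrable_trig_dot3 (trig : R -> R) (xi : R * R * R) :
  continuous trig -> (forall u, `|trig u| <= 1) ->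
  mu.-integrable setT (EFin \o (fun v => trig (dot3 xi v))).
Proof.
move=> trig_cont trig_le1; apply: (@integrable_bounded _ 1) => //.
exact: measurableT_comp (continuous_measurable_fun trig_cont) (measurable_dot3 xi).
Qed.

Definition trig_comb (xi : R * R * R) (a b c : R) (v : R * R * R) : R :=
  a + b * cos (dot3 xi v) + c * sin (dot3 xi v).

Lemma integrable_scale_cos_dot3 xi (b : R) :
  mu.-integrable setT (EFin \o (fun v => b * cos (dot3 xi v))).
Proof.
exact: (integrableZl measurableT b (integrable_trig_dot3 cos xi (@continuous_cos R) (@cos_max R))).
Qed.

Lemma integrable_scale_sin_dot3 xi (c : R) :
  mu.-integrable setT (EFin \o (fun v => c * sin (dot3 xi v))).
Proof.
exact: (integrableZl measurableT c (integrable_trig_dot3 sin xi (@continuous_sin R) (@sin_max R))).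
Qed.

Lemma integrable_cst_add_cos_dot3 xi (a b : R) :
  mu.-integrable setT (EFin \o (fun v => a + b * cos (dot3 xi v))).
Proof.
exact: (integrableD measurableT (finite_measure_integrable_cst mu a measurableT)
  (integrable_scale_cos_dot3 xi b)).
Qed.

Lemma integrable_trig_comb xi a b c : mu.-integrable setT (EFin \o trig_comb xi a b c).
Proof.
exact: (integrableD measurableT (integrable_cst_add_cos_dot3 xi a b)
  (integrable_scale_sin_dot3 xi c)).
Qed.

Lemma Rintegral_trig_comb xi a b c : Rintegral mu setT (trig_comb xi a b c) =
  a + b * fourier_re mu xi + c * fourier_im mu xi.
Proof.
rewrite /trig_comb (RintegralD measurableT (integrable_cst_add_cos_dot3 xi a b)
  (integrable_scale_sin_dot3 xi c)).
rewrite RintegralD ?RintegralZl //.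
- by rewrite Rintegral_cst // [X in fine X]probability_setT mulr1.
- exact: integrable_trig_dot3 (@continuous_sin R) (@sin_max R).
- exact: integrable_trig_dot3 (@continuous_cos R) (@cos_max R).
- exact: finite_measure_integrable_cst.
- exact: integrable_scale_cos_dot3.
Qed.

Lemma fourier_abs_ge0 xi : 0 <= fourier_abs mu xi.
Proof. exact: sqrtr_ge0. Qed.

Lemma fourier_unit_comb_le1 xi (c d : R) : c ^+ 2 + d ^+ 2 = 1 ->
  c * fourier_re mu xi + d * fourier_im mu xi <= 1.
Proof.
move=> cd1.
have -> : c * fourier_re mu xi + d * fourier_im mu xi =
          Rintegral mu setT (trig_comb xi 0 c d) by rewrite Rintegral_trig_comb add0r.
have -> : 1 = Rintegral mu setT (trig_comb xi 1 0 0) by rewrite Rintegral_trig_comb !mul0r !addr0.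
apply: le_Rintegral => //; [exact: integrable_trig_comb | exact: integrable_trig_comb |].
move=> v _; rewrite /trig_comb !mul0r !addr0 add0r.
have := cos2Dsin2 (dot3 xi v); set C := cos _; set S := sin _ => CS1.
have := sqr_ge0 (c - C); have := sqr_ge0 (d - S); nra.
Qed.

Lemma fourier_abs_le1 xi : fourier_abs mu xi <= 1.
Proof.
have [r_le0|r_gt0] := leP (fourier_abs mu xi) 0; first exact: le_trans r_le0 _.
have [cd1 r_eq] := unit_direction _ _ r_gt0.
by rewrite /fourier_abs -r_eq; exact: fourier_unit_comb_le1.
Qed.

Lemma fourier_abs_dbl3 xi :
  1 - fourier_abs mu (dbl3 xi) <= 4 * (1 - fourier_abs mu xi).
Proof.
have [r_le0|r_gt0] := leP (fourier_abs mu xi) 0.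
  have := fourier_abs_ge0 (dbl3 xi); have := fourier_abs_ge0 xi; lra.
have [cd1 r_eq] := unit_direction _ _ r_gt0.
set c := _ / _ in cd1 r_eq; set d := _ / _ in cd1 r_eq.
set x := c ^+ 2 - d ^+ 2; set y := 2 * c * d.
have xy1 : x ^+ 2 + y ^+ 2 = 1.
  by rewrite -(expr1n _ 2) -cd1 /x /y; ring.
have dbl_le := unit_dot_le_sqrt x y (fourier_re mu (dbl3 xi)) (fourier_im mu (dbl3 xi)) xy1.
have key : Rintegral mu setT (trig_comb (dbl3 xi) 1 (- x) (- y)) <=
           Rintegral mu setT (trig_comb xi 4 (- (4 * c)) (- (4 * d))).
  apply: le_Rintegral => //; [exact: integrable_trig_comb | exact: integrable_trig_comb |].
  move=> v _; rewrite /trig_comb dot3_dbl3 cos_mulr2n sin_mulr2n.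
  have := cos2Dsin2 (dot3 xi v); set C := cos _; set S := sin _ => CS1.
  have := sqr_ge0 (1 - (c * C + d * S)); rewrite /x /y; nra.
rewrite !Rintegral_trig_comb in key.
rewrite /fourier_abs -r_eq; move: dbl_le; rewrite /fourier_abs in r_eq *; lra.
Qed.

End CharacteristicFunction.

Lemma exists_dyadic_lt {R : realType} (M t : R) : 0 < t -> exists n, M / 2 ^+ n.+1 < t.
Proof.
move=> t_gt0; have [M_le0|M_gt0] := leP M 0.
  by exists 0%N; apply: le_lt_trans t_gt0; rewrite pmulr_lle0 // invr_gt0 exprn_gt0.
have Mt_ge0 : 0 <= M / t by rewrite divr_ge0 // ltW.
exists (Num.bound (M / t)); set N := Num.bound _.
have N_lt : M / t < N%:R := archi_boundP Mt_ge0.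
have N_le : (N%:R : R) <= 2 ^+ N by rewrite -natrX ler_nat ltnW // ltn_expl.
have pow_gt0 : 0 < (2 : R) ^+ N.+1 by rewrite exprn_gt0.
rewrite ltr_pdivrMr // mulrC -ltr_pdivrMr // exprS.
have : 1 <= (2 : R) ^+ N by rewrite exprn_ege1 // ler1n.
lra.
Qed.

Lemma one_sub_div_le_kernel {R : realType} (A s : R) : 0 < A -> 0 <= s ->
  1 - s / (8 * A) <= 9 * A / (9 * A + s).
Proof.
move=> A_gt0 s_ge0; set u := s / (8 * A).
have su : s = 8 * A * u by rewrite /u mulrC divfK // gt_eqF // mulr_gt0.
have u_ge0 : 0 <= u by rewrite /u divr_ge0 // ltW // mulr_gt0.
rewrite ler_pdivlMr; last lra.
rewrite su; nra.
Qed.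

Section DyadicDescent.
Context {R : realType} (f : R * R * R -> R) (M : R).
Hypothesis f_le1 : forall xi, f xi <= 1.
Hypothesis f_dbl3 : forall xi, 1 - f (dbl3 xi) <= 4 * (1 - f xi).
Hypothesis M_gt0 : 0 < M.
Hypothesis f_le_half : forall xi, M < norm3 xi -> f xi <= 2^-1.

Lemma dyadic_shell_quadratic n xi : M / 2 ^+ n.+1 < norm3 xi <= M ->
  norm3 xi ^+ 2 / (8 * M ^+ 2) <= 1 - f xi.
Proof.
have den_gt0 : 0 < 8 * M ^+ 2 by rewrite mulr_gt0 // exprn_gt0.
elim: n xi => [|n IH] xi /andP[lo hi]; have t_ge0 := norm3_ge0 xi.
  have far : M < norm3 (dbl3 xi) by rewrite norm3_dbl3; move: lo; rewrite expr1; lra.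
  have := f_le_half _ far; have := f_dbl3 xi => dbl half.
  have : 8^-1 <= 1 - f xi by lra.
  apply: le_trans; rewrite ler_pdivrMr // mulrA mulVf ?mul1r //.
  by rewrite lerXn2r // ?nnegrE //; lra.
have [lo'|lo'] := ltP (M / 2 ^+ n.+1) (norm3 xi); first by apply: IH; rewrite lo' hi.
have pow2_ge2 : 2 <= (2 : R) ^+ n.+1 by rewrite exprS ler_peMr // exprn_ege1 // ler1n.
have half_pow : M / 2 ^+ n.+1 <= M / 2 by rewrite ler_pM2l // lef_pV2 ?posrE // exprn_gt0.
rewrite exprS invfM mulrA in lo.
have inner : M / 2 ^+ n.+1 < norm3 (dbl3 xi) <= M.
  by rewrite norm3_dbl3; apply/andP; split; lra.
have := IH _ inner; rewrite norm3_dbl3 exprMn; have := f_dbl3 xi.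
rewrite (_ : 2 ^+ 2 * norm3 xi ^+ 2 / (8 * M ^+ 2) = 4 * (norm3 xi ^+ 2 / (8 * M ^+ 2)));
  last by rewrite expr2; ring.
lra.
Qed.

Lemma ball_quadratic xi : norm3 xi <= M -> sqnorm3 xi / (8 * M ^+ 2) <= 1 - f xi.
Proof.
move=> t_le; rewrite -sqr_norm3.
have [t_le0|t_gt0] := leP (norm3 xi) 0.
  have -> : norm3 xi = 0 by apply/eqP; rewrite eq_le t_le0 norm3_ge0.
  by rewrite expr0n /= mul0r subr_ge0.
have [n lo] := exists_dyadic_lt M _ t_gt0.
by apply: (dyadic_shell_quadratic n); rewrite lo t_le.
Qed.

Lemma le_kernel_ball xi : norm3 xi <= 3 * M ->
  f xi <= (3 * M) ^+ 2 / ((3 * M) ^+ 2 + sqnorm3 xi).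
Proof.
move=> t_le; have s_ge0 := sqnorm3_ge0 xi.
have L_gt0 : 0 < (3 * M) ^+ 2 by rewrite exprn_gt0 // mulr_gt0.
have [t_leM|t_gtM] := leP (norm3 xi) M.
  have := ball_quadratic _ t_leM; have := one_sub_div_le_kernel _ _ (exprn_gt0 2 M_gt0) s_ge0.
  rewrite exprMn (_ : (3 : R) ^+ 2 = 9); last by rewrite expr2; lra.
  lra.
apply: le_trans (f_le_half _ t_gtM) _.
have : sqnorm3 xi <= (3 * M) ^+ 2 by rewrite -sqr_norm3 lerXn2r // ?nnegrE ?norm3_ge0 //; lra.
by move=> s_le; rewrite ler_pdivlMr; lra.
Qed.

End DyadicDescent.

Lemma ceil_exponent_bounds {R : realType} (p : R) : 0 < p ->
  let q := (2 * (Num.ceil (2 / p))%:~R)^-1 in [/\ 0 < q, q <= 1 & 2 * q <= p].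
Proof.
move=> p_gt0 q; set k : R := (Num.ceil (2 / p))%:~R.
have k_ge : 2 / p <= k := ceil_ge _.
have k_ge1 : 1 <= k by rewrite /k ler1z -gtz0_ge1 ceil_gt0 // divr_gt0.
split; first by rewrite invr_gt0; lra.
  by rewrite invf_le1; lra.
rewrite /q invfM mulrA mulfV ?mul1r ?pnatr_eq0 // -div1r ler_pdivrMr; last lra.
have : 2 <= k * p by rewrite -ler_pdivrMr.
rewrite -/k; lra.
Qed.

Lemma kernel_in01 {R : realType} (L s : R) : 0 < L -> 0 <= s -> 0 < L / (L + s) <= 1.
Proof. by move=> L_gt0 s_ge0; rewrite divr_gt0 ?ler_pdivrMr /=; lra. Qed.

Lemma inv_le_kernel {R : realType} (L s : R) : 2 <= L -> L <= s -> s^-1 <= L / (L + s).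
Proof.
move=> L_ge2 L_le; have s_gt0 : 0 < s by lra.
rewrite ler_pdivlMr; last lra.
rewrite mulrDr mulVf ?gt_eqF //.
have : s^-1 * L <= 1 by rewrite mulrC ler_pdivrMr // mul1r.
lra.
Qed.

Lemma le_kernel_far {R : realType} (L t p q a : R) :
  2 <= L -> 0 <= t -> L <= t ^+ 2 -> 0 < q -> 2 * q <= p -> 0 <= a ->
  t `^ p * a <= 2^-1 -> a <= (L / (L + t ^+ 2)) `^ q.
Proof.
move=> L_ge2 t_ge0 L_le q_gt0 q_le_p a_ge0 decay.
have t_ge1 : 1 <= t by nra.
have tp_ge : t `^ (2 * q) <= t `^ p by apply: ler_powR.
have t2q_gt0 : 0 < t `^ (2 * q) by rewrite powR_gt0 //; lra.
have a_le : a <= (t `^ p)^-1.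
  have tp_gt0 : 0 < t `^ p by apply: lt_le_trans tp_ge.
  by rewrite -(ler_pM2l tp_gt0) mulfV ?gt_eqF //; lra.
apply: (le_trans a_le); apply: (@le_trans _ _ ((t `^ (2 * q))^-1)).
  by rewrite lef_pV2 ?posrE // (lt_le_trans t2q_gt0 tp_ge).
have -> : (t `^ (2 * q))^-1 = ((t ^+ 2)^-1) `^ q.
  have -> : (t ^+ 2)^-1 = t `^ (-2).
    by rewrite -powR_inv1 ?sqr_ge0 // -(@powR_mulrn _ t 2) // -powRrM mulrN1.
  by rewrite -powRrM mulNr powRN.
have [kernel_gt0 _] := andP (kernel_in01 L (t ^+ 2) ltac:(lra) (sqr_ge0 t)).
apply: ge0_ler_powR; rewrite ?nnegrE ?invr_ge0 ?sqr_ge0 ?(ltW q_gt0) ?(ltW kernel_gt0) //.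
exact: inv_le_kernel.
Qed.

Lemma le_of_powR_mul_le {R : realType} (t p a e : R) :
  1 <= t -> 0 <= p -> 0 <= a -> t `^ p * a <= e -> a <= e.
Proof.
move=> t_ge1 p_ge0 a_ge0; apply: le_trans.
have : 1 <= t `^ p by rewrite -(powRr0 t) ler_powR.
nra.
Qed.

Theorem proposition2p1 (R : realType) (mu : probability (R * R * R)%type R)
  (p : R) (sigma : 'I_3 -> R) :
  (\int[mu]_v ((sqnorm3 v) ^+ 2)%:E < +oo)%E ->
  0 < p ->
  (forall eps : R, 0 < eps -> exists M : R, forall xi : R * R * R,
      M < norm3 xi -> (norm3 xi) `^ p * fourier_abs mu xi <= eps) ->
  (forall i : 'I_3, Rintegral mu setT (comp3 i) = 0) ->
  Rintegral mu setT sqnorm3 = 3 ->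
  (forall i : 'I_3, Rintegral mu setT (fun v => comp3 i v ^+ 2) = sigma i ^+ 2) ->
  (forall i j : 'I_3, i != j ->
      Rintegral mu setT (fun v => comp3 i v * comp3 j v) = 0) ->
  exists lambda : R, 0 < lambda /\
    forall xi : R * R * R,
      fourier_abs mu xi <=
        (lambda ^+ 2 / (lambda ^+ 2 + sqnorm3 xi))
          `^ ((2 * (Num.ceil (2 / p))%:~R)^-1).
Proof.
move=> _ p_gt0 decay _ _ _ _.
have [M1 decayM1] := decay 2^-1 ltac:(rewrite invr_gt0; lra).
set M := Num.max M1 1.
have M_ge1 : 1 <= M by rewrite le_max lexx orbT.
have M_gt0 : 0 < M by lra.
have decayM xi : M < norm3 xi -> norm3 xi `^ p * fourier_abs mu xi <= 2^-1.
  by move=> farM; apply: decayM1; apply: le_lt_trans farM; rewrite le_max lexx.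
have half xi : M < norm3 xi -> fourier_abs mu xi <= 2^-1.
  move=> farM; apply: le_of_powR_mul_le (ltW p_gt0) (fourier_abs_ge0 mu xi) (decayM _ farM).
  lra.
have [q_gt0 q_le1 q_le_p] := ceil_exponent_bounds _ p_gt0.
exists (3 * M); split=> [|xi]; first lra.
have [near|far] := leP (norm3 xi) (3 * M).
- have L_gt0 : 0 < (3 * M) ^+ 2 by rewrite exprn_gt0 //; lra.
  apply: le_trans (ger1_powR (kernel_in01 _ _ L_gt0 (sqnorm3_ge0 xi)) q_le1).
  exact: le_kernel_ball (fourier_abs_le1 mu) (fourier_abs_dbl3 mu) M_gt0 half _ near.
- rewrite -sqr_norm3; apply: le_kernel_far (norm3_ge0 xi) _ q_gt0 q_le_p _ (decayM _ _).
  + by rewrite expr2; nra.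
  + by rewrite lerXn2r ?nnegrE ?norm3_ge0 //; lra.
  + exact: fourier_abs_ge0.
  + lra.
Qed.
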